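(* Let $\mathcal Y=(\Gamma,T)$ be a coherent configuration, $m\ge1$, $\Delta=\{1,\dots,m\}$, $L\le\mathrm{Sym}(\Delta)$, and $\mathcal X=\mathcal Y\uparrow L=(\Omega,S)$ with $\Omega=\Gamma^m$. For $\alpha,\beta\in\Omega$ let $d(\alpha,\beta)$ be the number of $i\in\Delta$ with $\alpha_i\neq\beta_i$, let $r_i=\{(\alpha,\beta):d(\alpha,\beta)=i\}$ for $0\le i\le m$, $r_{-1}=\emptyset$ and $r=r_1$. Fix $\gamma_0\in\Gamma$, let $\alpha\in\Omega$ be the point with all coordinates $\gamma_0$, and for $i\in\Delta$ let $\Gamma_i=\{\beta\in\Omega:d(\alpha,\beta)=1,\ \beta_i\ne\gamma_0\}$, so that $\alpha r=\{\beta:(\alpha,\beta)\in r\}$ is the disjoint union of the $\Gamma_i$. Then the map $\rho:\Omega\to2^{\alpha r}$, $\beta\mapsto\beta r_{d-1}\cap\alpha r$ where $d=d(\alpha,\beta)$ (and $\beta r_{d-1}=\{\delta:(\beta,\delta)\in r_{d-1}\}$), is injective and its image is $\{\Lambda\subseteq\alpha r: |\Lambda\cap\Gamma_i|\le 1\text{ for all }i\in\Delta\}$. In particular, the set $\alpha r$ is a base of the coherent configuration $\mathcal X_\alpha$.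
   Context: A coherent configuration on a finite set $\Omega$ is $(\Omega,S)$ with $S$ a partition of $\Omega\times\Omega$ such that $1_\Omega$ is a union of elements of $S$, $s^*=\{(\beta,\alpha):(\alpha,\beta)\in s\}\in S$, and for $r,s,t\in S$ the number $|\{\gamma:(\alpha,\gamma)\in r,(\gamma,\beta)\in s\}|$ is independent of $(\alpha,\beta)\in t$; fibers are sets $\Gamma$ with $1_\Gamma\in S$. Exponentiation: for $t_1,\dots,t_m\in T$ put $t_1\otimes\dots\otimes t_m=\{(\alpha,\beta)\in\Gamma^m\times\Gamma^m:(\alpha_i,\beta_i)\in t_i\ \forall i\}$; $L$ acts on $\Gamma^m$ by permuting coordinates and hence on such relations; $\mathcal Y\uparrow L=(\Gamma^m,\{\bigcup_{l\in L}t^l:t=t_1\otimes\dots\otimes t_m,\ t_i\in T\})$, a coherent configuration. A fission of $\mathcal X$ is a coherent configuration on $\Omega$ whose relations (unions of basic relations) include those of $\mathcal X$; complete: all basic relations singletons. $\mathcal X_\alpha$ is the smallest fission of $\mathcal X$ in which $\{\alpha\}$ is a fiber. A set $B$ is a base of a coherent configuration $\mathcal Z$ if the smallest fission of $\mathcal Z$ in which every $\{\beta\}$, $\beta\in B$, is a fiber is complete. *)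

From mathcomp Require Import all_boot all_order all_algebra all_fingroup.
Set Implicit Arguments. Unset Strict Implicit. Unset Printing Implicit Defensive.

Section CC.
Variable Om : finType.

Definition diagR : {set Om * Om} := [set p | p.1 == p.2].

Definition transR (s : {set Om * Om}) : {set Om * Om} :=
  [set p | (p.2, p.1) \in s].

Definition is_cc (S : {set {set Om * Om}}) : Prop :=
  [/\ partition S [set: Om * Om],
      exists2 P : {set {set Om * Om}}, P \subset S & cover P = diagR,
      forall s, s \in S -> transR s \in S &
      forall r s t, r \in S -> s \in S -> t \in S ->
        forall a b a' b', (a, b) \in t -> (a', b') \in t ->
          #|[set g | ((a, g) \in r) && ((g, b) \in s)]| =
          #|[set g | ((a', g) \in r) && ((g, b') \in s)]| ].

Definition fission (S' S : {set {set Om * Om}}) : Prop :=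
  is_cc S' /\
  forall s, s \in S -> exists2 P : {set {set Om * Om}}, P \subset S' & cover P = s.

Definition complete (S : {set {set Om * Om}}) : Prop :=
  forall s, s \in S -> #|s| = 1%N.

Definition points_fibers (B : {set Om}) (S : {set {set Om * Om}}) : Prop :=
  forall b, b \in B -> [set (b, b)] \in S.

Definition smallest_pt_fission (Z : {set {set Om * Om}}) (B : {set Om})
    (F : {set {set Om * Om}}) : Prop :=
  [/\ fission F Z, points_fibers B F &
      forall F', fission F' Z -> points_fibers B F' -> fission F' F].

Definition is_base (Z : {set {set Om * Om}}) (B : {set Om}) : Prop :=
  forall F, smallest_pt_fission Z B F -> complete F.
End CC.

Section Exp.
Variables (G : finType) (m : nat).
Notation Om := {ffun 'I_m -> G}.

Definition perm_pt (l : {perm 'I_m}) (x : Om) : Om := [ffun i => x (l i)].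

Definition tensorR (t : {ffun 'I_m -> {set G * G}}) : {set Om * Om} :=
  [set p : Om * Om | [forall i, (p.1 i, p.2 i) \in t i]].

Definition upRel (L : {set {perm 'I_m}}) (t : {ffun 'I_m -> {set G * G}})
  : {set Om * Om} :=
  [set p : Om * Om | [exists l in L, (perm_pt l p.1, perm_pt l p.2) \in tensorR t]].

Definition upS (T : {set {set G * G}}) (L : {set {perm 'I_m}})
  : {set {set Om * Om}} :=
  [set upRel L t | t in [set t : {ffun 'I_m -> {set G * G}} | [forall i, t i \in T]]].

Definition dist (a b : Om) : nat := #|[set i | a i != b i]|.

(* r_i, for i an integer (r_{-1} is empty automatically) *)
Definition rR (i : int) : {set Om * Om} := [set p : Om * Om | ((dist p.1 p.2)%:Z == i)%R].

Definition nbh (i : int) (b : Om) : {set Om} := [set d | (b, d) \in rR i].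

Definition constpt (g0 : G) : Om := [ffun=> g0].

Definition GammaI (g0 : G) (i : 'I_m) : {set Om} :=
  [set b | (dist (constpt g0) b == 1%N) && (b i != g0)].

Definition rho (g0 : G) (b : Om) : {set Om} :=
  nbh ((dist (constpt g0) b)%:Z - 1)%R b :&: nbh 1%R (constpt g0).
End Exp.
Arguments constpt {G m} g0.

From mathcomp Require Import all_boot all_order all_algebra all_fingroup.
From mathcomp Require Import zify.
Set Implicit Arguments. Unset Strict Implicit. Unset Printing Implicit Defensive.

(* If [b j != g0], the point that equals [b j] at [j] and [g0] elsewhere lies in
   [rho b], and every point of [rho b] has this form; so [rho b] records exactly the
   coordinates of [b] different from [g0], which gives injectivity and the image.

   In [Y \uparrow L] a coordinate pair lies on the diagonal of [Y] iff its basic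
   relation of [Y] does, so every basic relation of [Y \uparrow L] has constant
   Hamming distance; this persists in every fission.  Now let [alpha] and every point
   of [alpha r] be fibers, and let [(c, c)] lie in the basic relation of [(b, b)].
   For a fiber [{e}], intersection numbers force [(c, e)] into the basic relation of
   [(b, e)], so [c] and [b] have the same distance to [alpha] and to every point of
   [alpha r].  Hence [rho c = rho b], so [c = b]: every point is a fiber, and the
   fission is complete. *)

Section CoherentConfiguration.
Variable Om : finType.
Implicit Types (S : {set {set Om * Om}}) (p : Om * Om).

Lemma cc_cover S : is_cc S -> cover S = [set: Om * Om].
Proof. by case=> /and3P [/eqP]. Qed.

Lemma cc_pblock_mem S p : is_cc S -> pblock S p \in S.
Proof. by move=> ccS; rewrite pblock_mem // cc_cover ?inE. Qed.

Lemma cc_mem_pblock S p : is_cc S -> p \in pblock S p.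
Proof. by move=> ccS; rewrite mem_pblock cc_cover ?inE. Qed.

Lemma cc_def_pblock S s p : is_cc S -> s \in S -> p \in s -> pblock S p = s.
Proof. by case=> /and3P [_ tS _] _ _ _; apply: def_pblock. Qed.

Lemma cc_rel_neq0 S s : is_cc S -> s \in S -> exists p, p \in s.
Proof.
case=> /and3P [_ _ S0] _ _ _ sS.
have [s0 | [p ps]] := set_0Vmem s; last by exists p.
by move: S0; rewrite -s0 sS.
Qed.

Lemma cc_intersection_number S r s t a b a' b' :
    is_cc S -> r \in S -> s \in S -> t \in S -> (a, b) \in t -> (a', b') \in t ->
  #|[set g | ((a, g) \in r) && ((g, b) \in s)]| =
  #|[set g | ((a', g) \in r) && ((g, b') \in s)]|.
Proof. by case=> _ _ _ icS rS sS tS; apply: icS. Qed.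

Lemma cc_diagE S s p : is_cc S -> s \in S -> p \in s -> (p.1 == p.2) = (s \subset diagR Om).
Proof.
move=> ccS sS ps; apply/idP/idP => [p_diag | /subsetP /(_ p ps)]; last by rewrite inE.
have [_ [P PS coverP] _ _] := ccS.
have : p \in cover P by rewrite coverP inE.
case/bigcupP => q qP pq.
by rewrite -(cc_def_pblock ccS sS ps) (cc_def_pblock ccS (subsetP PS q qP) pq) -coverP bigcup_sup.
Qed.

Section Fiber.
Variables (S : {set {set Om * Om}}) (e : Om).
Hypotheses (ccS : is_cc S) (fiber_e : [set (e, e)] \in S).

Lemma cc_fiber_snd u x a a' : u \in S -> (x, e) \in u -> (a, a') \in u -> a' = e.
Proof.
move=> uS xe aa'.
have := cc_intersection_number ccS uS fiber_e uS xe aa'.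
have -> : [set g | ((x, g) \in u) && ((g, e) \in [set (e, e)])] = [set e].
  apply/setP=> g; rewrite !inE xpair_eqE eqxx andbT.
  by case: eqP => [->|_]; rewrite ?xe ?andbF.
rewrite cards1 => /esym/eqP/cards1P [g /setP/(_ g)].
by rewrite !inE eqxx => /andP [_ /eqP [_ ->]].
Qed.

Lemma cc_fiber_fst u x a a' : u \in S -> (e, x) \in u -> (a, a') \in u -> a = e.
Proof.
move=> uS ex aa'.
have := cc_intersection_number ccS fiber_e uS uS ex aa'.
have -> : [set g | ((e, g) \in [set (e, e)]) && ((g, x) \in u)] = [set e].
  apply/setP=> g; rewrite !inE xpair_eqE eqxx /=.
  by case: eqP => [->|_]; rewrite ?ex ?andbF.
rewrite cards1 => /esym/eqP/cards1P [g /setP/(_ g)].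
by rewrite !inE eqxx => /andP [/eqP [-> _] _].
Qed.

(* Counting the paths [b -u-> g -> b] with [u] the relation of [(b, e)] and the
   return step in the relation of [(e, b)] shows that [c] has a [u]-successor,
   which the fiber [{e}] forces to be [e]. *)
Lemma cc_fiber_pblock s b c c' : s \in S -> (b, b) \in s -> (c, c') \in s ->
  (c, e) \in pblock S (b, e).
Proof.
move=> sS bb cc'.
set u := pblock S (b, e); set v := pblock S (e, b).
have [uS vS] : u \in S /\ v \in S by split; apply: cc_pblock_mem.
have [be eb] : (b, e) \in u /\ (e, b) \in v by split; apply: cc_mem_pblock.
have : 0 < #|[set g | ((b, g) \in u) && ((g, b) \in v)]|.
  by apply/card_gt0P; exists e; rewrite inE be eb.
rewrite (cc_intersection_number ccS uS vS sS bb cc') => /card_gt0P [g].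
by rewrite inE => /andP [cg _]; rewrite -(cc_fiber_snd uS be cg).
Qed.

End Fiber.

Lemma cc_complete_of_fibers S : is_cc S -> (forall x, [set (x, x)] \in S) -> complete S.
Proof.
move=> ccS fiber s sS; have [[x y] xy] := cc_rel_neq0 ccS sS.
suff -> : s = [set (x, y)] by rewrite cards1.
apply/setP => [[a a']]; rewrite inE; apply/idP/eqP => [aa' | [-> ->] //].
by rewrite (cc_fiber_fst ccS (fiber x) sS xy aa') (cc_fiber_snd ccS (fiber y) sS xy aa').
Qed.

Lemma fission_fiber S' S e : fission S' S -> [set (e, e)] \in S -> [set (e, e)] \in S'.
Proof.
case=> _ refines fiber_e; have [P PS' coverP] := refines _ fiber_e.
have : (e, e) \in cover P by rewrite coverP inE.
case/bigcupP => q qP eq; suff <- : q = [set (e, e)] by apply: (subsetP PS').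
by apply/eqP; rewrite eqEsubset sub1set eq -coverP bigcup_sup.
Qed.

Definition rel_invariant (rT : Type) S (w : Om * Om -> rT) :=
  forall s p q, s \in S -> p \in s -> q \in s -> w p = w q.

Lemma fission_rel_invariant (rT : Type) S' S (w : Om * Om -> rT) :
  fission S' S -> cover S = [set: Om * Om] -> rel_invariant S w -> rel_invariant S' w.
Proof.
case=> ccS' refines coverS wS f p q fS' pf qf.
have : p \in cover S by rewrite coverS inE.
case/bigcupP => s sS ps; have [P PS' coverP] := refines _ sS.
have : p \in cover P by rewrite coverP.
case/bigcupP => f' f'P pf'.
have f'f : f' = f by rewrite -(cc_def_pblock ccS' (subsetP PS' _ f'P) pf') (cc_def_pblock ccS' fS' pf).
apply: (wS s) => //; rewrite -coverP; apply/bigcupP; exists f' => //.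
by rewrite f'f.
Qed.

End CoherentConfiguration.

(* [rho] uses [r_{d-1}] with an integer index, so that [r_{-1}] is empty. *)
Lemma int_eq_pred (n k : nat) : (n%:Z == k%:Z - 1)%R = (n.+1 == k).
Proof. by apply/eqP/eqP => h; lia. Qed.

Section Hamming.
Variables (G : finType) (m : nat) (g0 : G).
Notation Om := {ffun 'I_m -> G}.
Notation alpha := (constpt g0 : Om).
Implicit Types (b c d : Om).

Definition supp b : {set 'I_m} := [set i | b i != g0].

Lemma dist_constpt b : dist alpha b = #|supp b|.
Proof. by apply: eq_card => i; rewrite !inE ffunE eq_sym. Qed.

Lemma distC b c : dist b c = dist c b.
Proof. by apply: eq_card => i; rewrite !inE eq_sym. Qed.

Lemma in_nbh i b d : (d \in nbh i b) = ((dist b d)%:Z == i)%R.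
Proof. by rewrite !inE. Qed.

Lemma in_nbh1 b d : (d \in nbh 1%R b) = (dist b d == 1%N).
Proof. by rewrite in_nbh. Qed.

Definition unitpt (j : 'I_m) (x : G) : Om := [ffun i => if i == j then x else g0].

Lemma supp_unitpt j x : x != g0 -> supp (unitpt j x) = [set j].
Proof. by move=> xg0; apply/setP => i; rewrite !inE ffunE; case: (i == j); rewrite ?eqxx. Qed.

Lemma dist_constpt_unitpt j x : x != g0 -> dist alpha (unitpt j x) = 1%N.
Proof. by move=> xg0; rewrite dist_constpt supp_unitpt // cards1. Qed.

Lemma unitptE d j : dist alpha d = 1%N -> d j != g0 -> d = unitpt j (d j).
Proof.
rewrite dist_constpt => /eqP/cards1P [k supp_d] dj.
have jk : j = k by apply/set1P; rewrite -supp_d inE.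
apply/ffunP => i; rewrite ffunE; case: eqP => [-> // | ij].
apply/eqP; apply: contraT => di.
have : i \in supp d by rewrite inE.
by rewrite supp_d => /set1P; rewrite -jk.
Qed.

Lemma nbh1_unitpt d : dist alpha d = 1%N -> exists2 j, d j != g0 & d = unitpt j (d j).
Proof.
move=> d1; have := d1; rewrite dist_constpt => /eqP/cards1P [j supp_d].
have : j \in supp d by rewrite supp_d inE.
by rewrite inE => dj; exists j => //; apply: unitptE.
Qed.

Lemma mem_rho_unitpt b j x : x != g0 -> (unitpt j x \in rho g0 b) = (b j == x).
Proof.
move=> xg0; rewrite inE !in_nbh dist_constpt_unitpt // eqxx andbT.
rewrite dist_constpt int_eq_pred.
have [bj | bj] := eqVneq (b j) x.
- rewrite (cardsD1 j (supp b)) inE bj xg0 add1n eqSS; apply/eqP.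
  apply: eq_card => i; rewrite !inE ffunE.
  by case: (eqVneq i j) => [-> | ij]; rewrite ?bj ?eqxx.
- apply/negbTE; rewrite neq_ltn; apply/orP; right; rewrite ltnS.
  apply/subset_leq_card/subsetP => i; rewrite !inE ffunE.
  by case: (eqVneq i j) => [-> | ij] //; rewrite eq_sym.
Qed.

Lemma rho_sub b : rho g0 b \subset nbh 1%R alpha.
Proof. exact: subsetIr. Qed.

Lemma mem_rho d b i : d \in rho g0 b -> dist alpha d = 1%N -> d i != g0 ->
  d = unitpt i (b i).
Proof. by move=> + d1 di; rewrite (unitptE d1 di) mem_rho_unitpt // => /eqP ->. Qed.

Lemma rho_inj : injective (@rho G m g0).
Proof.
have rho_coord b c j : rho g0 b = rho g0 c -> b j != g0 -> c j = b j.
  by move=> ebc bj; apply/eqP; rewrite -mem_rho_unitpt // -ebc mem_rho_unitpt.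
move=> b c ebc; apply/ffunP => j.
have [bj | bj] := eqVneq (b j) g0; last by rewrite (rho_coord b c).
have [cj | cj] := eqVneq (c j) g0; last by rewrite (rho_coord c b).
by rewrite bj cj.
Qed.

Lemma rho_image : [set rho g0 b | b : Om] =
  [set Lam : {set Om} | (Lam \subset nbh 1%R alpha) &&
                        [forall i : 'I_m, #|Lam :&: GammaI g0 i| <= 1]].
Proof.
apply/setP => Lam; rewrite inE; apply/imsetP/andP => [[b _ ->] | [Lam_sub /forallP Lam_le1]].
  split; first exact: rho_sub.
  apply/forallP => i; apply/card_le1_eqP => d d'.
  move=> /setIP [dr]; rewrite inE => /andP [/eqP d1 di].
  move=> /setIP [d'r]; rewrite inE => /andP [/eqP d'1 d'i].
  by rewrite (mem_rho dr d1 di) (mem_rho d'r d'1 d'i).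
pose b : Om := [ffun i => if [pick d in Lam :&: GammaI g0 i] is Some d then d i else g0].
exists b => //; apply/setP => d.
have GammaIE j : dist alpha d = 1%N -> d j != g0 ->
    (d \in Lam :&: GammaI g0 j) = (d \in Lam).
  by move=> d1 dj; rewrite !inE d1 eqxx dj !andbT.
apply/idP/idP => [dL | dr].
  have /eqP d1 : dist alpha d == 1%N by rewrite -in_nbh1 (subsetP Lam_sub).
  have [j dj ->] := nbh1_unitpt d1; rewrite mem_rho_unitpt // ffunE.
  have dG : d \in Lam :&: GammaI g0 j by rewrite GammaIE.
  case: pickP => [d' d'G | none]; last by have := none d; rewrite dG.
  by rewrite (card_le1_eqP (Lam_le1 j) d' d d'G dG).
have /eqP d1 : dist alpha d == 1%N by rewrite -in_nbh1 (subsetP (rho_sub b)).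
have [j dj d_unit] := nbh1_unitpt d1; move: dr; rewrite d_unit mem_rho_unitpt // ffunE.
case: pickP => [d' | _]; last by rewrite eq_sym (negbTE dj).
rewrite !inE => /and3P [d'L /eqP d'1 d'j] /eqP d'jE.
by rewrite -d'jE -(unitptE d'1 d'j).
Qed.

Lemma rho_eq b c : dist alpha b = dist alpha c ->
  {in nbh 1%R alpha, forall d, dist b d = dist c d} -> rho g0 b = rho g0 c.
Proof.
move=> ebc edist; apply/setP => d; rewrite !in_setI.
case dn: (d \in nbh 1%R alpha); rewrite ?andbF // !andbT !in_nbh.
by rewrite ebc edist.
Qed.

Lemma points_fibers_of_dist_invariant (F : {set {set Om * Om}}) :
    is_cc F -> rel_invariant F (fun p => dist p.1 p.2) ->
    [set (alpha, alpha)] \in F -> points_fibers (nbh 1%R alpha) F ->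
  forall b, [set (b, b)] \in F.
Proof.
move=> ccF distF fiber_alpha fiber_nbh b.
have sF := cc_pblock_mem (b, b) ccF; have bb := cc_mem_pblock (b, b) ccF.
suff pblockE : pblock F (b, b) = [set (b, b)] by rewrite -pblockE.
apply/setP => [[c c']]; rewrite inE; apply/idP/eqP => [cc' | [-> ->] //].
have c'E : c' = c.
  by apply/esym/eqP; rewrite (cc_diagE ccF sF cc') -(cc_diagE ccF sF bb).
subst c'.
have dist_fiber e : [set (e, e)] \in F -> dist c e = dist b e.
  move=> fiber_e; have ce := cc_fiber_pblock ccF fiber_e sF bb cc'.
  exact: distF (cc_pblock_mem _ ccF) ce (cc_mem_pblock _ ccF).
suff -> : c = b by [].
apply: rho_inj; apply: rho_eq => [|d dn]; first by rewrite distC [RHS]distC dist_fiber.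
by rewrite dist_fiber //; apply: fiber_nbh.
Qed.

End Hamming.

Section Exponentiation.
Variables (G : finType) (m : nat) (T : {set {set G * G}}) (L : {group {perm 'I_m}}).
Notation Om := {ffun 'I_m -> G}.
Hypothesis ccT : is_cc T.

Lemma dist_upRel (t : {ffun 'I_m -> {set G * G}}) (p : Om * Om) : (forall i, t i \in T) -> p \in upRel L t ->
  dist p.1 p.2 = #|[set i | ~~ (t i \subset diagR G)]|.
Proof.
move=> tT; rewrite inE => /existsP [l /andP [_]]; rewrite inE => /forallP pt.
rewrite /dist -(card_preimset _ (@perm_inj _ l)); apply: eq_card => i.
by rewrite !inE -(cc_diagE ccT (tT i) (pt i)) !ffunE.
Qed.

Lemma upS_dist_invariant : rel_invariant (upS T L) (fun p : Om * Om => dist p.1 p.2).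
Proof.
move=> s p q /imsetP [t]; rewrite inE => /forallP tT -> ps qs.
by rewrite (dist_upRel tT ps) (dist_upRel tT qs).
Qed.

Lemma cover_upS : cover (upS T L) = [set: Om * Om].
Proof.
apply/setP => p; rewrite inE; apply/bigcupP.
pose t := [ffun i => pblock T (p.1 i, p.2 i)].
exists (upRel L t).
  by apply: imset_f; rewrite inE; apply/forallP => i; rewrite ffunE cc_pblock_mem.
rewrite inE; apply/existsP; exists 1%g; rewrite group1 inE; apply/forallP => i.
by rewrite !ffunE perm1 cc_mem_pblock.
Qed.

End Exponentiation.

Theorem lemma7p2 (G : finType) (m : nat) (T : {set {set G * G}})
    (L : {group {perm 'I_m}}) (g0 : G) :
  is_cc T -> (1 <= m)%N ->
  [/\ injective (@rho G m g0),
      [set rho g0 b | b : {ffun 'I_m -> G}] =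
        [set Lam : {set {ffun 'I_m -> G}} |
           (Lam \subset nbh 1%R (constpt g0)) &&
           [forall i : 'I_m, #|Lam :&: GammaI g0 i| <= 1]]
    & forall Xa, smallest_pt_fission (upS T L) [set constpt g0] Xa ->
        is_base Xa (nbh 1%R (constpt g0))].
Proof.
move=> ccT _; split; [exact: rho_inj | exact: rho_image |].
move=> Xa [fissionX fiberX _] F [fissionF fiberF _].
have [ccX ccF] := (fissionX.1, fissionF.1).
apply: cc_complete_of_fibers => //; apply: points_fibers_of_dist_invariant => //.
- apply: fission_rel_invariant fissionF (cc_cover ccX) _.
  exact: fission_rel_invariant fissionX (cover_upS L ccT) (upS_dist_invariant ccT).
- by apply: fission_fiber fissionF _; apply: fiberX; rewrite inE.
- exact: fiberF.
Qed.
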